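(* Let $f:E\to\mathbb{R}$ be $L$-smooth and $1$-weakly-quasi-convex with respect to a minimizer $x_*$ (in particular, this holds if $f$ is convex and $L$-smooth with minimizer $x_*$). Let Algorithm AGMsDR (either option) be run from $x^0$ for $N\ge1$ steps. Then $$\min_{k=\lceil N/2\rceil,\dots,N}\|\nabla f(y^k)\|_*^2\le\frac{64L^2V(x_*,x^0)}{N^3},\qquad f(x^N)-f(x_* )\le\frac{4LV(x_*,x^0)}{N^2}.$$
   Context: $E$ is a finite-dimensional real vector space with a norm $\|\cdot\|$; $E^*$ is its dual, $\langle g,x\rangle$ denotes the value of $g\in E^*$ at $x\in E$, and $\|g\|_*=\max\{\langle g,x\rangle:\|x\|\le 1\}$. For $g\in E^*$, $g^{\#}$ denotes a (fixed) element $s\in E$ with $\|s\|\le 1$ and $\langle g,s\rangle=\|g\|_*$. A prox-function $d:E\to\mathbb{R}$ is continuously differentiable, convex, $1$-strongly convex with respect to $\|\cdot\|$ (i.e. $d(y)-d(x)-\langle\nabla d(x),y-x\rangle\ge\frac12\|y-x\|^2$ for all $x,y\in E$) and satisfies $\min_E d=0$; its Bregman divergence is $V(x,z)=d(x)-d(z)-\langle\nabla d(z),x-z\rangle$. A function $f:E\to\mathbb{R}$ is $L$-smooth ($L>0$) if it is continuously differentiable and $\|\nabla f(x)-\nabla f(y)\|_*\le L\|x-y\|$ for all $x,y\in E$. A differentiable $f$ with a minimizer $x_*$ is $\gamma$-weakly-quasi-convex ($\gamma\in(0,1]$) if $\gamma(f(x)-f(x_* ))\le\langle\nabla f(x),x-x_*\rangle$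 for all $x\in E$. Algorithm AGMsDR (input $x^0\in E$, and $L$ for Option (a)): set $A_0=0$, $v^0=x^0$, $\psi_0(x)=V(x,x^0)$. For $k=0,1,2,\dots$: 1. Choose $\beta_k\in\arg\min_{\beta\in[0,1]} f(v^k+\beta(x^k-v^k))$ (a global minimizer over the interval) and set $y^k=v^k+\beta_k(x^k-v^k)$. 2. Option (a): $x^{k+1}\in\arg\min_{x\in E}\{f(y^k)+\langle\nabla f(y^k),x-y^k\rangle+\frac L2\|x-y^k\|^2\}$, and $a_{k+1}>0$ solves $\frac{a_{k+1}^2}{A_k+a_{k+1}}=\frac1L$. Option (b): $h_{k+1}\in\arg\min_{h\ge0} f(y^k-h(\nabla f(y^k))^{\#})$, $x^{k+1}=y^k-h_{k+1}(\nabla f(y^k))^{\#}$, and $a_{k+1}$ is the largest solution of $f(y^k)-\frac{a_{k+1}^2}{2(A_k+a_{k+1})}\|\nabla f(y^k)\|_*^2=f(x^{k+1})$. 3. $A_{k+1}=A_k+a_{k+1}$; $\psi_{k+1}(x)=\psi_k(x)+a_{k+1}\{f(y^k)+\langle\nabla f(y^k),x-y^k\rangle\}$; $v^{k+1}=\arg\min_{x\in E}\psi_{k+1}(x)$. It is assumed that all the minima in the algorithm are attained, and that $\nabla f(y^k)\neq 0$ for all iterations considered (otherwise $y^k$ is a stationary point and the method stops). *)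

From Stdlib Require Import Reals ClassicalEpsilon.
From mathcomp Require Import ssreflect ssrfun ssrbool eqtype ssrnat fintype bigop.
Set Implicit Arguments. Unset Strict Implicit.
Local Open Scope R_scope.

(* E = R^n (every n-dimensional real vector space is isomorphic to it);
   E^* is identified with R^n through the pairing <g,x> = sum_i g_i x_i. *)
Definition vec (n : nat) := 'I_n -> R.
Definition vadd n (x y : vec n) : vec n := fun i => x i + y i.
Definition vsub n (x y : vec n) : vec n := fun i => x i - y i.
Definition vscal n (a : R) (x : vec n) : vec n := fun i => a * x i.
Definition vzero n : vec n := fun _ => 0.
Definition pairing n (g x : vec n) : R := \big[Rplus/0]_(i < n) (g i * x i).

Definition is_norm n (nrm : vec n -> R) : Prop :=
  (forall x, nrm x = 0 -> x = @vzero n) /\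
  (forall a x, nrm (vscal a x) = Rabs a * nrm x) /\
  (forall x y, nrm (vadd x y) <= nrm x + nrm y).

Definition is_dual_max n (nrm : vec n -> R) (g : vec n) (r : R) : Prop :=
  (exists s, nrm s <= 1 /\ pairing g s = r) /\
  (forall x, nrm x <= 1 -> pairing g x <= r).

Definition dual_norm n (nrm : vec n -> R) (g : vec n) : R :=
  epsilon (inhabits 0) (fun r => is_dual_max nrm g r).

Definition is_sharp_map n (nrm : vec n -> R) (sharp : vec n -> vec n) : Prop :=
  forall g, nrm (sharp g) <= 1 /\ pairing g (sharp g) = dual_norm nrm g.

Definition has_gradient n (nrm : vec n -> R) (f : vec n -> R) (gr : vec n -> vec n) : Prop :=
  forall x eps, 0 < eps -> exists delta, 0 < delta /\
    forall h, nrm h < delta ->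
      Rabs (f (vadd x h) - f x - pairing (gr x) h) <= eps * nrm h.

Definition grad_continuous n (nrm : vec n -> R) (gr : vec n -> vec n) : Prop :=
  forall x eps, 0 < eps -> exists delta, 0 < delta /\
    forall y, nrm (vsub y x) < delta -> dual_norm nrm (vsub (gr y) (gr x)) < eps.

Definition convex_fun n (f : vec n -> R) : Prop :=
  forall x y t, 0 <= t <= 1 ->
    f (vadd (vscal t x) (vscal (1 - t) y)) <= t * f x + (1 - t) * f y.

Definition prox_function n (nrm : vec n -> R) (d : vec n -> R) (gd : vec n -> vec n) : Prop :=
  has_gradient nrm d gd /\ grad_continuous nrm gd /\ convex_fun d /\
  (forall x y, d y - d x - pairing (gd x) (vsub y x) >= / 2 * (nrm (vsub y x)) ^ 2) /\
  (exists x0, d x0 = 0) /\ (forall x, 0 <= d x).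

Definition bregman n (d : vec n -> R) (gd : vec n -> vec n) (x z : vec n) : R :=
  d x - d z - pairing (gd z) (vsub x z).

Definition L_smooth n (nrm : vec n -> R) (L : R) (f : vec n -> R) (gf : vec n -> vec n) : Prop :=
  0 < L /\ has_gradient nrm f gf /\ grad_continuous nrm gf /\
  (forall x y, dual_norm nrm (vsub (gf x) (gf y)) <= L * nrm (vsub x y)).

Definition weakly_quasi_convex n (gamma : R) (f : vec n -> R) (gf : vec n -> vec n)
  (xs : vec n) : Prop :=
  0 < gamma <= 1 /\ (forall x, f xs <= f x) /\
  (forall x, gamma * (f x - f xs) <= pairing (gf x) (vsub x xs)).

Inductive agm_option := OptionA | OptionB.

(* The sequences x, v, y, A, a, beta, h, psi form a run of AGMsDR (with the given
   option) from x0 for N steps: steps 1 for k = 0..N (so that y^N exists), steps 2-3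
   for k = 0..N-1, with grad f(y^k) <> 0 for k < N. *)
Definition AGMsDR_run n (nrm : vec n -> R) (sharp : vec n -> vec n)
  (d : vec n -> R) (gd : vec n -> vec n) (f : vec n -> R) (gf : vec n -> vec n)
  (L : R) (opt : agm_option) (x0 : vec n) (N : nat)
  (x v y : nat -> vec n) (A a beta h : nat -> R) (psi : nat -> vec n -> R) : Prop :=
  A 0%N = 0 /\ v 0%N = x0 /\ x 0%N = x0 /\ (forall z, psi 0%N z = bregman d gd z x0) /\
  (forall k, (k <= N)%N ->
     0 <= beta k <= 1 /\
     (forall b, 0 <= b <= 1 ->
        f (vadd (v k) (vscal (beta k) (vsub (x k) (v k))))
        <= f (vadd (v k) (vscal b (vsub (x k) (v k))))) /\
     y k = vadd (v k) (vscal (beta k) (vsub (x k) (v k)))) /\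
  (forall k, (k < N)%N ->
     gf (y k) <> @vzero n /\
     (match opt with
      | OptionA =>
          (forall z, f (y k) + pairing (gf (y k)) (vsub (x k.+1) (y k))
                       + L / 2 * (nrm (vsub (x k.+1) (y k))) ^ 2
                     <= f (y k) + pairing (gf (y k)) (vsub z (y k))
                       + L / 2 * (nrm (vsub z (y k))) ^ 2) /\
          0 < a k.+1 /\ (a k.+1) ^ 2 / (A k + a k.+1) = / L
      | OptionB =>
          0 <= h k.+1 /\
          (forall t, 0 <= t ->
             f (vsub (y k) (vscal (h k.+1) (sharp (gf (y k)))))
             <= f (vsub (y k) (vscal t (sharp (gf (y k)))))) /\
          x k.+1 = vsub (y k) (vscal (h k.+1) (sharp (gf (y k)))) /\
          A k + a k.+1 <> 0 /\
          f (y k) - (a k.+1) ^ 2 / (2 * (A k + a k.+1)) * (dual_norm nrm (gf (y k))) ^ 2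
            = f (x k.+1) /\
          (forall b, A k + b <> 0 ->
             f (y k) - b ^ 2 / (2 * (A k + b)) * (dual_norm nrm (gf (y k))) ^ 2
               = f (x k.+1) -> b <= a k.+1)
      end) /\
     A k.+1 = A k + a k.+1 /\
     (forall z, psi k.+1 z = psi k z + a k.+1 * (f (y k) + pairing (gf (y k)) (vsub z (y k)))) /\
     (forall z, psi k.+1 (v k.+1) <= psi k.+1 z)).

From Stdlib Require Import Reals Lra Psatz ClassicalEpsilon FunctionalExtensionality.
From mathcomp Require Import ssreflect ssrfun ssrbool eqtype ssrnat fintype bigop.
From mathcomp Require Import zify Rstruct.
From mathcomp Require all_boot all_order all_algebra all_classical all_analysis Rstruct_topology.
Set Implicit Arguments. Unset Strict Implicit.
Local Open Scope R_scope.

(* Nesterov's estimate sequence.  Each [psi k] is [d] plus an affine function, so its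
   minimizer [v k] satisfies [psi k z >= psi k (v k) + ||z - v k||^2 / 2].  Together with
   the optimality of the line search ([f (y k) <= f (x k)] and
   [<grad f (y k), v k - y k> >= 0]) and the sufficient decrease
   [a_{k+1}^2 ||grad f (y k)||_*^2 <= 2 A_{k+1} (f (y k) - f (x k+1))], this gives
   [A k f (x k) <= psi k (v k) <= psi k xs <= A k f xs + V xs x0], the last step by weak
   quasi-convexity.  As [A_{k+1} <= L a_{k+1}^2] forces [A k >= k^2 / (4L)], this is the
   rate for [f].  Every step also decreases [f] by at least [||grad f (y k)||_*^2 / (2L)];
   if all gradients after [ceil(N/2)] exceeded the claimed bound, the gap at [ceil(N/2)]
   would contradict the rate just proved. *)

Lemma vec_ext n (x y : vec n) : (forall i, x i = y i) -> x = y.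
Proof. by move=> H; apply: functional_extensionality. Qed.

Ltac vec_ring := apply: vec_ext => ?; cbv [vadd vsub vscal vzero]; ring.

Section Pairing.
Variable n : nat.
Implicit Types x y z g : vec n.

Lemma pairingC g x : pairing g x = pairing x g.
Proof. by apply: eq_bigr => i _; ring. Qed.

Lemma pairingDr g x y : pairing g (vadd x y) = pairing g x + pairing g y.
Proof. by rewrite /pairing -big_split /=; apply: eq_bigr => i _; rewrite /vadd; ring. Qed.

Lemma pairingZr g a x : pairing g (vscal a x) = a * pairing g x.
Proof. by rewrite /pairing big_distrr /=; apply: eq_bigr => i _; rewrite /vscal; ring. Qed.

Lemma pairingBr g x y : pairing g (vsub x y) = pairing g x - pairing g y.
Proof.
have -> : vsub x y = vadd x (vscal (-1) y) by vec_ring.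
by rewrite pairingDr pairingZr; ring.
Qed.

Lemma pairing0r g : pairing g (@vzero n) = 0.
Proof.
have -> : @vzero n = vscal 0 g by vec_ring.
by rewrite pairingZr; ring.
Qed.

Lemma pairingDl g1 g2 x : pairing (vadd g1 g2) x = pairing g1 x + pairing g2 x.
Proof. by rewrite pairingC pairingDr !(pairingC x). Qed.

Lemma pairingBl g1 g2 x : pairing (vsub g1 g2) x = pairing g1 x - pairing g2 x.
Proof. by rewrite pairingC pairingBr !(pairingC x). Qed.

Lemma pairingZl a g x : pairing (vscal a g) x = a * pairing g x.
Proof. by rewrite pairingC pairingZr pairingC. Qed.

Lemma pairing_self_gt0 g : g <> @vzero n -> 0 < pairing g g.
Proof.
move=> gne; have [i gi] : exists i, g i <> 0.
  apply: NNPP => H; apply: gne; apply: vec_ext => i.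
  by apply: NNPP => Hi; apply: H; exists i.
rewrite /pairing (bigD1 i) //=; apply: Rplus_lt_le_0_compat; first exact: Rsqr_pos_lt.
by apply: (big_ind (fun r => 0 <= r)) => [|*|j _]; nra.
Qed.

Lemma Rle_big (F G : 'I_n -> R) : (forall i, F i <= G i) ->
  \big[Rplus/0]_(i < n) F i <= \big[Rplus/0]_(i < n) G i.
Proof. by move=> H; apply: (big_ind2 (fun a b => a <= b)) => [|*|i _]; [lra|lra|apply: H]. Qed.

Lemma pairing_le_coord g x M : (forall i, Rabs (x i) <= M) ->
  Rabs (pairing g x) <= M * \big[Rplus/0]_(i < n) Rabs (g i).
Proof.
move=> H; apply: (@Rle_trans _ (\big[Rplus/0]_(i < n) Rabs (g i * x i))).
  apply: (big_ind2 (fun a b => Rabs a <= b)) => [|a1 b1 a2 b2 h1 h2|i _].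
  - by rewrite Rabs_R0; lra.
  - by have := Rabs_triang a1 a2; lra.
  - lra.
rewrite big_distrr /=; apply: Rle_big => i; rewrite Rabs_mult.
by have := Rabs_pos (g i); have := H i; nra.
Qed.

End Pairing.

Section Norm.
Variables (n : nat) (nrm : vec n -> R).
Hypothesis Hn : is_norm nrm.
Implicit Types x y z : vec n.

Lemma nrmZ a x : nrm (vscal a x) = Rabs a * nrm x.
Proof. by case: Hn => _ []. Qed.

Lemma nrm_triangle x y : nrm (vadd x y) <= nrm x + nrm y.
Proof. by case: Hn => _ []. Qed.

Lemma nrm_eq0 x : nrm x = 0 -> x = @vzero n.
Proof. by case: Hn => H _; apply: H. Qed.

Lemma nrm0 : nrm (@vzero n) = 0.
Proof.
have -> : @vzero n = vscal 0 (@vzero n) by vec_ring.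
by rewrite nrmZ Rabs_R0; ring.
Qed.

Lemma nrmN x : nrm (vscal (-1) x) = nrm x.
Proof. by rewrite nrmZ Rabs_Ropp Rabs_R1; ring. Qed.

Lemma nrm_ge0 x : 0 <= nrm x.
Proof.
have := nrm_triangle x (vscal (-1) x); rewrite nrmN.
have -> : vadd x (vscal (-1) x) = @vzero n by vec_ring.
by rewrite nrm0; lra.
Qed.

Lemma nrm_sub_ge x y : nrm x - nrm y <= nrm (vsub x y).
Proof.
have := nrm_triangle (vsub x y) y.
have -> : vadd (vsub x y) y = x by vec_ring.
lra.
Qed.

Lemma Rabs_nrmB_le x y : Rabs (nrm x - nrm y) <= nrm (vsub x y).
Proof.
have := nrm_sub_ge y x; have := nrm_sub_ge x y.
have -> : vsub y x = vscal (-1) (vsub x y) by vec_ring.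
by rewrite nrmN => *; apply: Rabs_le; lra.
Qed.

Definition unit_vec (i : 'I_n) : vec n := fun j => if j == i then 1 else 0.

Lemma nrm_le_coord x M : (forall i, Rabs (x i) <= M) ->
  nrm x <= M * \big[Rplus/0]_(i < n) nrm (unit_vec i).
Proof.
move=> H.
have -> : x = \big[@vadd n/@vzero n]_(i < n) vscal (x i) (unit_vec i).
  apply: vec_ext => j.
  rewrite (big_morph (fun u : vec n => u j) (id1 := 0) (op1 := Rplus)) //.
  rewrite (bigD1 j) //= /vscal /unit_vec eqxx big1 /= => [|i ij]; first ring.
  by rewrite eq_sym (negbTE ij); ring.
rewrite big_distrr /=; apply: (big_ind2 (fun u r => nrm u <= r)) => [|u1 r1 u2 r2 h1 h2|i _].
- by rewrite nrm0; lra.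
- by have := nrm_triangle u1 u2; lra.
- by rewrite nrmZ; have := nrm_ge0 (unit_vec i); have := H i; nra.
Qed.

End Norm.

(* The maximum defining [||g||_*] is attained: on row vectors with the max-norm, [nrm]
   is continuous and dominates a multiple of the max-norm, so its unit ball is compact. *)
Module DualNormAttained.
Import all_boot all_order all_algebra all_classical all_analysis Rstruct_topology.
Import Order.TTheory GRing.Theory Num.Theory Num.Def numFieldNormedType.Exports.
Local Open Scope classical_set_scope.
Local Open Scope ring_scope.

Section Coordinates.
Variables (n : nat) (nrm : vec n -> R).
Hypothesis Hn : is_norm nrm.

Definition of_row (v : 'rV[R]_n) : vec n := fun i => v ord0 i.
Definition to_row (x : vec n) : 'rV[R]_n := \row_i x i.

Lemma of_to_row x : of_row (to_row x) = x.
Proof. by apply: vec_ext => i; rewrite /of_row /to_row mxE. Qed.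

Lemma of_rowB v w : of_row (v - w) = vsub (of_row v) (of_row w).
Proof. by apply: vec_ext => i; rewrite /of_row /vsub !mxE. Qed.

Lemma of_rowZ a v : of_row (a *: v) = vscal a (of_row v).
Proof. by apply: vec_ext => i; rewrite /of_row /vscal !mxE. Qed.

Lemma of_row0 : of_row 0 = @vzero n.
Proof. by apply: vec_ext => i; rewrite /of_row /vzero !mxE. Qed.

Lemma coord_le_norm (v : 'rV[R]_n) i : `|v ord0 i| <= `|v|.
Proof.
have /mapP[j Hj ->] : `|v ord0 i| \in [seq `|v x.1 x.2| | x : 'I_1 * 'I_n].
  by apply/mapP; exists (ord0, i) => //=; rewrite mem_enum.
by rewrite [leRHS]/normr /= mx_normrE; apply/bigmax_geP; right => /=; exists j.
Qed.

Lemma lipschitz_continuous (F : 'rV[R]_n -> R) (C : R) : 0 <= C ->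
  (forall v w, `|F v - F w| <= C * `|v - w|) -> continuous F.
Proof.
move=> C0 H v; apply: (proj2 (@cvgrPdist_lt R R^o _ (nbhs v) (nbhs_filter v) F (F v))) => e e0.
have e1 : 0 < e / (C + 1) by rewrite divr_gt0 // ltr_wpDl.
near=> w; apply: le_lt_trans (H v w) _.
have hw : `|v - w| < e / (C + 1).
  by near: w; exact: (@cvgr_dist_lt R _ _ (nbhs v) (nbhs_filter v) id v cvg_id _ e1).
apply: le_lt_trans (ler_wpM2l C0 (ltW hw)) _.
by rewrite mulrCA gtr_pMr // ltr_pdivrMr ?mul1r ?ltrDl // ltr_wpDl.
Unshelve. all: by end_near.
Qed.

Lemma sum_ge0 (F : 'I_n -> R) : (forall i, Rle 0 (F i)) -> 0 <= \big[Rplus/0%R]_(i < n) F i.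
Proof. by move=> F0; apply: (big_ind (fun r => 0 <= r)) => // [a b|i _]; [apply: addr_ge0|apply/RleP]. Qed.

Lemma nrm_continuous : continuous (fun v => nrm (of_row v)).
Proof.
apply: (lipschitz_continuous (sum_ge0 (fun i => nrm_ge0 Hn (unit_vec i)))) => v w.
apply/RleP; apply: Rle_trans (Rabs_nrmB_le Hn _ _) _.
rewrite -of_rowB mulrC; apply: nrm_le_coord => // i; apply/RleP; exact: coord_le_norm.
Qed.

Lemma pairing_continuous g : continuous (fun v => pairing g (of_row v)).
Proof.
apply: (lipschitz_continuous (sum_ge0 (fun i => Rabs_pos (g i)))) => v w.
have -> : pairing g (of_row v) - pairing g (of_row w) = pairing g (of_row (v - w)).
  by rewrite of_rowB pairingBr.
rewrite mulrC; apply/RleP; apply: pairing_le_coord => i.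
apply/RleP; exact: coord_le_norm.
Qed.

Lemma bounded_by (A : set 'rV[R]_n) (M : R) : (forall v, A v -> `|v| <= M) -> bounded_set A.
Proof.
move=> H; exists M; split; first exact: num_real.
by move=> M' MM' v Av /=; exact: le_trans (H v Av) (ltW MM').
Qed.

Lemma nrm_ge_max_norm : (0 < n)%N -> exists2 mu, 0 < mu & forall v, mu * `|v| <= nrm (of_row v).
Proof.
move=> n0; pose S := [set v : 'rV[R]_n | `|v| = 1].
have S0 : S !=set0.
  pose v1 : 'rV[R]_n := const_mx 1.
  have v1ne : v1 != 0.
    apply/eqP => /(congr1 (fun M : 'rV[R]_n => M ord0 (Ordinal n0))).
    by rewrite !mxE => /eqP; rewrite oner_eq0.
  by exists (`|v1|^-1 *: v1); rewrite /S /= normfZV.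
have cS : compact S.
  apply: bounded_closed_compact; first by apply: (@bounded_by _ 1) => v ->.
  have -> : S = (fun v : 'rV[R]_n => `|v|) @^-1` [set 1] by [].
  apply: preimage_closed; last exact: closed_eq.
  by move=> v _; apply: norm_continuous.
have [c cS1 cmin] := EVT_min_rV S0 cS (continuous_subspaceT nrm_continuous).
move: cS1; rewrite in_setE /S /= => c1.
have F0 v : 0 <= nrm (of_row v) by apply/RleP; apply: nrm_ge0.
exists (nrm (of_row c)).
  rewrite lt_neqAle F0 andbT; apply/eqP => /esym /(nrm_eq0 Hn) c0.
  move: c1; have -> : c = 0 by apply/matrixP => i j; rewrite (ord1 i) mxE; apply: (congr1 (fun u => u j) c0).
  by rewrite normr0 => /eqP; rewrite eq_sym oner_eq0.
move=> v; have [->|vne] := eqVneq v 0; first by rewrite normr0 mulr0 F0.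
have vpos : 0 < `|v| by rewrite normr_gt0.
have := cmin (`|v|^-1 *: v); rewrite in_setE /S /= normfZV // => /(_ erefl).
rewrite of_rowZ nrmZ //.
have -> : Rabs (`|v|^-1) = `|v|^-1 by rewrite Rabs_pos_eq //; apply/RleP; rewrite invr_ge0.
by rewrite -ler_pdivlMr // mulrC.
Qed.

Lemma dual_max_exists g : exists r, is_dual_max nrm g r.
Proof.
have [n0|] := eqVneq n 0%N.
  subst n; exists 0; split.
    by exists (@vzero 0); rewrite nrm0 // /pairing big_ord0; split => //; apply/RleP.
  by move=> x _; rewrite /pairing big_ord0; apply/RleP.
rewrite -lt0n => /nrm_ge_max_norm [mu mu0 Fmu].
pose B := [set v : 'rV[R]_n | nrm (of_row v) <= 1].
have B0 : B !=set0 by exists 0; rewrite /B /= of_row0 nrm0 // ler01.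
have cB : compact B.
  apply: bounded_closed_compact.
    apply: (@bounded_by _ mu^-1) => v Bv.
    by rewrite -(ler_pM2l mu0) mulfV ?gt_eqF //; exact: le_trans (Fmu v) Bv.
  have -> : B = (fun v => nrm (of_row v)) @^-1` [set x | x <= 1] by [].
  apply: preimage_closed; last exact: closed_le.
  by move=> v _; apply: nrm_continuous.
have [c cB1 cmax] := EVT_max_rV B0 cB (continuous_subspaceT (@pairing_continuous g)).
move: cB1; rewrite in_setE /B /= => c1.
exists (pairing g (of_row c)); split; first by exists (of_row c); split => //; apply/RleP.
move=> x x1; apply/RleP; have := cmax (to_row x); rewrite of_to_row; apply.
by rewrite in_setE /B /= of_to_row; apply/RleP.
Qed.

End Coordinates.
End DualNormAttained.

Section DualNorm.
Variables (n : nat) (nrm : vec n -> R).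
Hypothesis Hn : is_norm nrm.
Implicit Types x g : vec n.
Local Notation D := (dual_norm nrm).

Lemma dual_normP g : is_dual_max nrm g (D g).
Proof. by apply: epsilon_spec; apply: DualNormAttained.dual_max_exists. Qed.

Lemma pairing_le_dual g x : pairing g x <= D g * nrm x.
Proof.
have [_ Hmax] := dual_normP g.
have [x0|xne] := Req_dec (nrm x) 0.
  by rewrite x0 (nrm_eq0 Hn x0) pairing0r; have := Hmax (@vzero n); rewrite nrm0 // pairing0r; lra.
have xp : 0 < nrm x by have := nrm_ge0 Hn x; lra.
have := Hmax (vscal (/ nrm x) x).
rewrite nrmZ // pairingZr Rabs_pos_eq; last by apply: Rlt_le; apply: Rinv_0_lt_compat.
rewrite Rinv_l // => /(_ (Rle_refl 1)) H.
have -> : pairing g x = nrm x * (/ nrm x * pairing g x) by field.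
by rewrite Rmult_comm; apply: Rmult_le_compat_r; lra.
Qed.

Lemma dual_norm_ge0 g : 0 <= D g.
Proof.
have [_ Hmax] := dual_normP g.
by have := Hmax (@vzero n); rewrite nrm0 // pairing0r; apply; lra.
Qed.

Lemma Rabs_pairing_le_dual g x : Rabs (pairing g x) <= D g * nrm x.
Proof.
apply: Rabs_le; split; last exact: pairing_le_dual.
by have := pairing_le_dual g (vscal (-1) x); rewrite pairingZr nrmN //; lra.
Qed.

Lemma dual_norm_gt0 g : g <> @vzero n -> 0 < D g.
Proof.
move=> gne; have := pairing_self_gt0 gne; have := pairing_le_dual g g.
have := dual_norm_ge0 g; have := nrm_ge0 Hn g.
have [->|] := Req_dec (D g) 0; lra.
Qed.

End DualNorm.

Lemma derivable_pt_lim_min_left (phi : R -> R) t0 l r : 0 < r ->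
  derivable_pt_lim phi t0 l -> (forall t, t0 - r <= t <= t0 -> phi t0 <= phi t) -> l <= 0.
Proof.
move=> r0 Hd Hmin; apply: Rnot_lt_le => l0.
have [del Hdel] := Hd (l / 2) ltac:(lra).
have del0 := cond_pos del.
pose s := - Rmin r (del / 2).
have s_lt0 : s < 0 by have := Rmin_pos r (del / 2) r0 ltac:(lra); rewrite /s; lra.
have s_ge : - r <= s by have := Rmin_l r (del / 2); rewrite /s; lra.
have s_abs : Rabs s < del by rewrite Rabs_left //; have := Rmin_r r (del / 2); rewrite /s; lra.
have := Hdel s ltac:(lra) s_abs; have := Hmin (t0 + s) ltac:(lra).
move=> hmin /Rabs_def2 [_ hq].
have : (phi (t0 + s) - phi t0) / s <= 0.
  have -> : (phi (t0 + s) - phi t0) / s = (phi t0 - phi (t0 + s)) * / (- s) by field; lra.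
  have : 0 < / - s by apply: Rinv_0_lt_compat; lra.
  nra.
move=> *; lra.
Qed.

Lemma derivable_pt_lim_quadratic c1 c2 t :
  derivable_pt_lim (fun s => c1 * s + c2 * s ^ 2) t (c1 + 2 * c2 * t).
Proof.
have H := derivable_pt_lim_plus _ _ t _ _
  (derivable_pt_lim_scal _ c1 t _ (derivable_pt_lim_id t))
  (derivable_pt_lim_scal _ c2 t _ (derivable_pt_lim_pow t 2)).
by have -> : c1 + 2 * c2 * t = c1 * 1 + c2 * (INR 2 * t ^ (2 - 1)) by simpl; ring.
Qed.

Section Gradient.
Variables (n : nat) (nrm : vec n -> R) (f : vec n -> R) (gf : vec n -> vec n).
Hypothesis Hn : is_norm nrm.
Implicit Types x y z h l : vec n.

Lemma has_gradient_line : has_gradient nrm f gf -> forall y h t,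
  derivable_pt_lim (fun s => f (vadd y (vscal s h))) t (pairing (gf (vadd y (vscal t h))) h).
Proof.
move=> Hg y h t eps eps0.
have [h0|hne] := Req_dec (nrm h) 0.
  exists (mkposreal 1 Rlt_0_1) => s _ _ /=.
  have e u : vadd y (vscal u (@vzero n)) = y by vec_ring.
  rewrite (nrm_eq0 Hn h0) !e pairing0r.
  have -> : (f y - f y) / s - 0 = 0 by rewrite /Rdiv; ring.
  by rewrite Rabs_R0.
have hp : 0 < nrm h by have := nrm_ge0 Hn h; lra.
have [del [del0 Hd]] := Hg (vadd y (vscal t h)) (eps / 2 / nrm h) ltac:(apply: Rdiv_lt_0_compat; lra).
have dp : 0 < del / nrm h by apply: Rdiv_lt_0_compat.
exists (mkposreal _ dp) => s sne /= sd.
have -> : vadd y (vscal (t + s) h) = vadd (vadd y (vscal t h)) (vscal s h) by vec_ring.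
have hs : nrm (vscal s h) < del.
  rewrite nrmZ //; have := Rmult_lt_compat_r _ _ _ hp sd.
  by rewrite /Rdiv Rmult_assoc Rinv_l ?Rmult_1_r; lra.
have := Hd _ hs; rewrite pairingZr nrmZ //.
set P := pairing _ h; set F1 := f (vadd _ (vscal s h)); set F0 := f _ => H1.
have sp : 0 < Rabs s by apply: Rabs_pos_lt.
have -> : (F1 - F0) / s - P = (F1 - F0 - s * P) / s by field.
rewrite /Rdiv Rabs_mult Rabs_inv; apply: (Rle_lt_trans _ (eps / 2)); last lra.
apply: (Rmult_le_reg_r (Rabs s)) => //; rewrite Rmult_assoc Rinv_l ?Rmult_1_r; last lra.
by have <- : eps / 2 / nrm h * (Rabs s * nrm h) = eps / 2 * Rabs s by field; lra.
Qed.

Lemma has_gradient_add_linear l : has_gradient nrm f gf ->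
  has_gradient nrm (fun z => f z + pairing l z) (fun z => vadd (gf z) l).
Proof.
move=> Hg x eps eps0; have [del [del0 Hd]] := Hg x eps eps0.
exists del; split => // h hd; have := Hd h hd.
by rewrite pairingDl pairingDr; congr (Rabs _ <= _); ring.
Qed.

Lemma L_smooth_upper L : L_smooth nrm L f gf -> forall y h,
  f (vadd y h) <= f y + pairing (gf y) h + L / 2 * nrm h ^ 2.
Proof.
move=> [L0 [Hg [_ Hl]]] y h.
set c := pairing (gf y) h; set q := L / 2 * nrm h ^ 2.
pose phi t := f (vadd y (vscal t h)) - (c * t + q * t ^ 2).
pose phi' t := pairing (gf (vadd y (vscal t h))) h - (c + 2 * q * t).
have dphi t : 0 <= t <= 1 -> derivable_pt_lim phi t (phi' t).
  move=> _; apply: derivable_pt_lim_minus; first exact: has_gradient_line.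
  exact: derivable_pt_lim_quadratic.
have [t [Ht [t0 t1]]] := MVT_cor2 phi phi' 0 1 Rlt_0_1 dphi.
have phi'_le0 : phi' t <= 0.
  have -> : phi' t = pairing (vsub (gf (vadd y (vscal t h))) (gf y)) h - 2 * q * t.
    by rewrite /phi' pairingBl /c; ring.
  have := pairing_le_dual Hn (vsub (gf (vadd y (vscal t h))) (gf y)) h.
  have := Hl (vadd y (vscal t h)) y.
  have -> : vsub (vadd y (vscal t h)) y = vscal t h by vec_ring.
  rewrite nrmZ // Rabs_pos_eq; last lra.
  have := nrm_ge0 Hn h; rewrite /q /=; nra.
have -> : vadd y h = vadd y (vscal 1 h) by vec_ring.
have {2}-> : y = vadd y (vscal 0 h) by vec_ring.
by move: Ht; rewrite /phi /=; nra.
Qed.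

End Gradient.

Section Prox.
Variables (n : nat) (nrm : vec n -> R) (d : vec n -> R) (gd : vec n -> vec n).
Hypotheses (Hn : is_norm nrm) (Hd : prox_function nrm d gd).
Implicit Types z w l : vec n.

Lemma bregman_ge z w : / 2 * nrm (vsub z w) ^ 2 <= bregman d gd z w.
Proof. by case: Hd => _ [_ [_ [H _]]]; apply: Rge_le; apply: H. Qed.

Lemma bregman_ge0 z w : 0 <= bregman d gd z w.
Proof. by have := bregman_ge z w; have := pow2_ge_0 (nrm (vsub z w)); lra. Qed.

(* The minimizer of [d] plus a linear form is a critical point, so the
   1-strong convexity of [d] gives quadratic growth away from it. *)
Lemma argmin_prox_linear_growth l w :
  (forall z, d w + pairing l w <= d z + pairing l z) ->
  forall z, d w + pairing l w + / 2 * nrm (vsub z w) ^ 2 <= d z + pairing l z.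
Proof.
move=> Hmin z; case: Hd => Hgd _.
have crit : pairing (vadd (gd w) l) (vsub w z) <= 0.
  have e : vadd w (vscal 0 (vsub w z)) = w by vec_ring.
  have := derivable_pt_lim_min_left Rlt_0_1
    (has_gradient_line Hn (has_gradient_add_linear l Hgd) w (vsub w z) 0).
  by rewrite /= !e; apply=> t _; apply: Hmin.
have := bregman_ge z w; move: crit.
rewrite /bregman pairingDl !pairingBr; lra.
Qed.

End Prox.

Section GradientStep.
Variables (n : nat) (nrm : vec n -> R) (sharp : vec n -> vec n)
  (f : vec n -> R) (gf : vec n -> vec n) (L : R).
Hypotheses (Hn : is_norm nrm) (Hs : is_sharp_map nrm sharp) (HL : L_smooth nrm L f gf).
Implicit Types z : vec n.

(* The length [||g||_* / L] minimizes the model [- t ||g||_* + L t^2 / 2] along [- g#]. *)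
Definition grad_step z := vsub z (vscal (dual_norm nrm (gf z) / L) (sharp (gf z))).

Lemma grad_step_model z :
  pairing (gf z) (vsub (grad_step z) z) + L / 2 * nrm (vsub (grad_step z) z) ^ 2
  <= - dual_norm nrm (gf z) ^ 2 / (2 * L).
Proof.
have [L0 _] := HL.
have [s1 ps] := Hs (gf z).
have -> : vsub (grad_step z) z = vscal (- (dual_norm nrm (gf z) / L)) (sharp (gf z)).
  by rewrite /grad_step; vec_ring.
set G := dual_norm nrm (gf z) in ps *; set t := G / L.
have t0 : 0 <= t by apply: Rmult_le_pos; [apply: dual_norm_ge0 | apply: Rlt_le; apply: Rinv_0_lt_compat].
rewrite pairingZr ps nrmZ // Rabs_Ropp Rabs_pos_eq //.
have s0 := nrm_ge0 Hn (sharp (gf z)).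
have : L / 2 * (t * nrm (sharp (gf z))) ^ 2 <= L / 2 * t ^ 2.
  apply: Rmult_le_compat_l; first lra.
  have : 0 <= t * nrm (sharp (gf z)) <= t by split; nra.
  by move=> ?; simpl; nra.
have -> : - G ^ 2 / (2 * L) = - t * G + L / 2 * t ^ 2 by rewrite /t; field; lra.
lra.
Qed.

Lemma grad_step_decrease z : f (grad_step z) <= f z - dual_norm nrm (gf z) ^ 2 / (2 * L).
Proof.
have := L_smooth_upper Hn HL z (vsub (grad_step z) z).
have -> : vadd z (vsub (grad_step z) z) = grad_step z by vec_ring.
have := grad_step_model z; lra.
Qed.

End GradientStep.

Lemma quadratic_largest_root_gt0 A0 a c : 0 <= A0 -> 0 < c ->
  (forall b, A0 + b <> 0 -> b ^ 2 / (A0 + b) = c -> b <= a) -> 0 < a.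
Proof.
move=> A0_ge0 c0 Hmax.
pose S := sqrt (c ^ 2 + 4 * c * A0).
have S2 : S * S = c ^ 2 + 4 * c * A0 by apply: sqrt_sqrt; nra.
have S0 : 0 <= S by apply: sqrt_pos.
have root : ((c + S) / 2) ^ 2 / (A0 + (c + S) / 2) = c.
  have -> : ((c + S) / 2) ^ 2 = c * (A0 + (c + S) / 2) by simpl; nra.
  by field; lra.
have pos : A0 + (c + S) / 2 <> 0 by apply: Rgt_not_eq; lra.
by apply: Rlt_le_trans (Hmax _ pos root); lra.
Qed.

Lemma sq_succ_le_of_step K S a L : 0 < L -> 0 <= K -> 0 < a ->
  K ^ 2 <= 4 * L * S -> S + a <= L * a ^ 2 -> (K + 1) ^ 2 <= 4 * L * (S + a).
Proof.
move=> L0 K0 a0 HK HS; pose w := 2 * L * a.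
have hw : 4 * L * S + 2 * w <= w ^ 2 by rewrite /w; nra.
have w0 : 0 < w by rewrite /w; nra.
have w2 : 2 <= w by nra.
have wK : K <= w - 1 by apply: Rnot_lt_le => ?; nra.
by rewrite /w in hw wK *; nra.
Qed.

Lemma uphalf_bounds N : (1 <= N)%N -> (1 <= uphalf N <= N)%N.
Proof. by rewrite uphalf_half; have := odd_double_half N; lia. Qed.

Lemma uphalf_cube_le N : (1 <= N)%N ->
  INR N ^ 3 <= 8 * INR (uphalf N) ^ 2 * (INR N - INR (uphalf N) + 1).
Proof.
move=> N1; have e2 : (uphalf N + uphalf N = N + odd N)%N.
  by rewrite uphalf_half; have := odd_double_half N; lia.
have := f_equal INR e2; rewrite -!plusE !plus_INR.
have := pos_INR (odd N); have : INR (odd N) <= 1 by apply: (le_INR _ 1); apply/leP; apply: leq_b1.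
have : 1 <= INR N by apply: (le_INR 1); apply/leP.
set Nr := INR N; set mr := INR (uphalf N) => N1r odd1 odd0 e.
have : Nr ^ 2 <= (2 * mr) ^ 2 by apply: pow_incr; lra.
have -> : Nr ^ 3 = Nr ^ 2 * Nr by ring.
have -> : 8 * mr ^ 2 * (Nr - mr + 1) = (2 * mr) ^ 2 * (2 * (Nr - mr + 1)) by ring.
by move=> ?; apply: Rmult_le_compat => //; try apply: pow2_ge_0; lra.
Qed.

Lemma uphalf_tail_bound N C : (1 <= N)%N -> 0 <= C ->
  4 * C / INR (uphalf N) ^ 2 <= INR (N - uphalf N).+1 * (32 * C / INR N ^ 3).
Proof.
move=> N1 C0; have cube := uphalf_cube_le N1.
have /andP [m1 mN] := uphalf_bounds N1.
have m0 : 0 < INR (uphalf N) by apply: lt_0_INR; apply/ltP.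
have N0 : 0 < INR N by apply: lt_0_INR; apply/ltP.
rewrite S_INR minus_INR; last by apply/leP.
set Nr := INR N in cube N0 *; set mr := INR (uphalf N) in cube m0 *.
have -> : 4 * C / mr ^ 2 = 4 * C * Nr ^ 3 / (mr ^ 2 * Nr ^ 3) by field; split; lra.
have -> : (Nr - mr + 1) * (32 * C / Nr ^ 3) = 4 * C * (8 * mr ^ 2 * (Nr - mr + 1)) / (mr ^ 2 * Nr ^ 3).
  by field; split; lra.
apply: Rmult_le_compat_r; first by apply: Rlt_le; apply: Rinv_0_lt_compat; apply: Rmult_lt_0_compat; apply: pow_lt.
by apply: Rmult_le_compat_l; lra.
Qed.

Lemma step_size_bounds_A A0 a G df L : 0 <= A0 -> 0 < L -> 0 < a ->
  a ^ 2 / (A0 + a) = / L -> G ^ 2 / (2 * L) <= df ->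
  A0 + a <= L * a ^ 2 /\ a ^ 2 / 2 * G ^ 2 <= (A0 + a) * df.
Proof.
move=> A0_ge0 L0 a0 Ha dec.
have AL : A0 + a = L * a ^ 2.
  have -> : L * a ^ 2 = L * (a ^ 2 / (A0 + a)) * (A0 + a) by field; lra.
  by rewrite Ha Rinv_r; lra.
split; first lra.
rewrite AL; have := Rmult_le_compat_l (L * a ^ 2) _ _ ltac:(nra) dec.
by have -> : L * a ^ 2 * (G ^ 2 / (2 * L)) = a ^ 2 / 2 * G ^ 2 by field; lra.
Qed.

Lemma step_size_bounds_B A0 a G df L : 0 <= A0 -> 0 < L -> 0 < G ->
  G ^ 2 / (2 * L) <= df -> A0 + a <> 0 -> a ^ 2 / (2 * (A0 + a)) * G ^ 2 = df ->
  (forall b, A0 + b <> 0 -> b ^ 2 / (2 * (A0 + b)) * G ^ 2 = df -> b <= a) ->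
  0 < a /\ A0 + a <= L * a ^ 2 /\ a ^ 2 / 2 * G ^ 2 <= (A0 + a) * df.
Proof.
move=> A0_ge0 L0 G0 dec ne Ha Hmax.
have G2 : 0 < G ^ 2 by apply: pow_lt.
have dec' : G ^ 2 <= 2 * L * df.
  have -> : G ^ 2 = 2 * L * (G ^ 2 / (2 * L)) by field; lra.
  by apply: Rmult_le_compat_l; lra.
have key : a ^ 2 * G ^ 2 = 2 * (A0 + a) * df by rewrite -Ha; field.
have c0 : 0 < 2 * df / G ^ 2 by apply: Rdiv_lt_0_compat; nra.
have a0 : 0 < a.
  apply: (quadratic_largest_root_gt0 A0_ge0 c0) => b nb Hb; apply: Hmax => //.
  have -> : b ^ 2 / (2 * (A0 + b)) * G ^ 2 = b ^ 2 / (A0 + b) * G ^ 2 / 2 by field.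
  by rewrite Hb; field; lra.
split; [done | split; last lra].
have : (A0 + a) * G ^ 2 <= L * a ^ 2 * G ^ 2 by rewrite Rmult_assoc key; nra.
nra.
Qed.

Section AGMsDR.
Variables (n : nat) (nrm : vec n -> R) (sharp : vec n -> vec n)
  (d : vec n -> R) (gd : vec n -> vec n) (f : vec n -> R) (gf : vec n -> vec n)
  (L : R) (xs : vec n) (opt : agm_option) (x0 : vec n) (N : nat)
  (x v y : nat -> vec n) (A a beta h : nat -> R) (psi : nat -> vec n -> R).
Hypotheses (Hn : is_norm nrm) (Hs : is_sharp_map nrm sharp) (Hd : prox_function nrm d gd)
  (HL : L_smooth nrm L f gf) (Hq : weakly_quasi_convex 1 f gf xs)
  (Hrun : AGMsDR_run nrm sharp d gd f gf L opt x0 N x v y A a beta h psi).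

Local Notation G k := (dual_norm nrm (gf (y k))).
Local Notation V := (bregman d gd xs x0).

Let L_gt0 : 0 < L. Proof. by case: HL. Qed.
Let f_gradient : has_gradient nrm f gf. Proof. by case: HL => _ []. Qed.

Lemma run_A0 : A 0 = 0. Proof. by case: Hrun. Qed.
Lemma run_v0 : v 0 = x0. Proof. by case: Hrun => _ []. Qed.
Lemma run_psi0 z : psi 0 z = bregman d gd z x0. Proof. by case: Hrun => _ [_ [_ []]]. Qed.

Lemma run_grad_neq0 k : (k < N)%N -> gf (y k) <> @vzero n.
Proof. by move=> hk; case: Hrun => _ [_ [_ [_ [_ /(_ k hk) []]]]]. Qed.

Lemma run_A_succ k : (k < N)%N -> A k.+1 = A k + a k.+1.
Proof. by move=> hk; case: Hrun => _ [_ [_ [_ [_ /(_ k hk) [_ [_ []]]]]]]. Qed.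

Lemma run_psi_succ k z : (k < N)%N ->
  psi k.+1 z = psi k z + a k.+1 * (f (y k) + pairing (gf (y k)) (vsub z (y k))).
Proof. by move=> hk; case: Hrun => _ [_ [_ [_ [_ /(_ k hk) [_ [_ [_ []]]]]]]]. Qed.

Lemma run_v_argmin k z : (k < N)%N -> psi k.+1 (v k.+1) <= psi k.+1 z.
Proof. by move=> hk; case: Hrun => _ [_ [_ [_ [_ /(_ k hk) [_ [_ [_ [_]]]]]]]]. Qed.

Lemma f_y_le_f_x k : (k <= N)%N -> f (y k) <= f (x k).
Proof.
move=> hk; case: Hrun => _ [_ [_ [_ [/(_ k hk) [_ [Hmin ->]] _]]]].
have := Hmin 1 ltac:(lra).
by have -> : vadd (v k) (vscal 1 (vsub (x k) (v k))) = x k by vec_ring.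
Qed.

(* First-order optimality of the line search at [beta k > 0]. *)
Lemma pairing_grad_y_ge0 k : (k <= N)%N -> 0 <= pairing (gf (y k)) (vsub (v k) (y k)).
Proof.
move=> hk; case: Hrun => _ [_ [_ [_ [/(_ k hk) [b01 [Hmin ->]] _]]]].
have -> : vsub (v k) (vadd (v k) (vscal (beta k) (vsub (x k) (v k))))
  = vscal (- beta k) (vsub (x k) (v k)) by vec_ring.
rewrite pairingZr; have [b0|bpos] : beta k = 0 \/ 0 < beta k by lra.
  by rewrite b0; lra.
have := derivable_pt_lim_min_left bpos (has_gradient_line Hn f_gradient (v k) (vsub (x k) (v k)) (beta k)).
by move=> /(_ _) le0; have := le0 (fun t ht => Hmin t ltac:(lra)); nra.
Qed.

Lemma grad_decrease k : (k < N)%N -> f (x k.+1) <= f (y k) - G k ^ 2 / (2 * L).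
Proof.
move=> hk; case: Hrun => _ [_ [_ [_ [_ /(_ k hk) [_ [Hopt _]]]]]].
have dec := grad_step_decrease Hn Hs HL (y k).
case: opt Hopt => [[Hmin _] | [_ [Hminh [-> _]]]].
- have := L_smooth_upper Hn HL (y k) (vsub (x k.+1) (y k)).
  have -> : vadd (y k) (vsub (x k.+1) (y k)) = x k.+1 by vec_ring.
  have := Hmin (grad_step nrm sharp gf L (y k)); have := grad_step_model Hn Hs HL (y k); lra.
- apply: Rle_trans (Hminh _ _) dec.
  apply: Rmult_le_pos; [by apply: dual_norm_ge0 | apply: Rlt_le; apply: Rinv_0_lt_compat; exact: L_gt0].
Qed.

Lemma step_size_bounds k : (k < N)%N -> 0 <= A k ->
  0 < a k.+1 /\ A k.+1 <= L * a k.+1 ^ 2 /\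
  a k.+1 ^ 2 / 2 * G k ^ 2 <= A k.+1 * (f (y k) - f (x k.+1)).
Proof.
move=> hk Ak0.
have Gpos : 0 < G k by apply: dual_norm_gt0 => //; exact: run_grad_neq0.
have dec : G k ^ 2 / (2 * L) <= f (y k) - f (x k.+1) by have := grad_decrease hk; lra.
rewrite (run_A_succ hk).
case: Hrun => _ [_ [_ [_ [_ /(_ k hk) [_ [Hopt _]]]]]].
case: opt Hopt => [[_ [a0 Ha]] | [_ [_ [_ [ne [Ha Hmax]]]]]].
- by split; last exact: step_size_bounds_A L_gt0 a0 Ha dec.
- apply: step_size_bounds_B L_gt0 Gpos dec ne _ _ => //; first lra.
  by move=> b nb Hb; apply: Hmax => //; lra.
Qed.

Lemma A_ge0 k : (k <= N)%N -> 0 <= A k.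
Proof.
elim: k => [|k IH] hk; first by rewrite run_A0; lra.
have [a0 _] := step_size_bounds hk (IH (ltnW hk)).
by rewrite (run_A_succ hk); have := IH (ltnW hk); lra.
Qed.

Lemma A_lower k : (k <= N)%N -> INR k ^ 2 <= 4 * L * A k.
Proof.
elim: k => [|k IH] hk; first by rewrite run_A0 /=; lra.
have [a0 [AL _]] := step_size_bounds hk (A_ge0 (ltnW hk)).
rewrite (run_A_succ hk) in AL *; rewrite S_INR.
by apply: sq_succ_le_of_step => //; [exact: pos_INR | exact: IH (ltnW hk)].
Qed.

Lemma psi_affine k : (k <= N)%N -> exists c l, forall z, psi k z = d z + c + pairing l z.
Proof.
elim: k => [|k IH] hk.
  exists (- d x0 + pairing (gd x0) x0), (vscal (-1) (gd x0)) => z.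
  by rewrite run_psi0 /bregman pairingBr pairingZl; ring.
have [c [l Hl]] := IH (ltnW hk).
exists (c + a k.+1 * f (y k) - a k.+1 * pairing (gf (y k)) (y k)), (vadd l (vscal (a k.+1) (gf (y k)))) => z.
by rewrite run_psi_succ // Hl pairingDl pairingZl pairingBr; ring.
Qed.

Lemma psi_argmin k z : (k <= N)%N -> psi k (v k) <= psi k z.
Proof.
case: k => [|k] hk; last exact: run_v_argmin.
rewrite !run_psi0 run_v0 {1}/bregman.
have -> : vsub x0 x0 = @vzero n by vec_ring.
by rewrite pairing0r; have := bregman_ge0 Hd z x0; lra.
Qed.

Lemma psi_growth k z : (k <= N)%N -> psi k (v k) + / 2 * nrm (vsub z (v k)) ^ 2 <= psi k z.
Proof.
move=> hk; have [c [l Hl]] := psi_affine hk.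
have argmin u : d (v k) + pairing l (v k) <= d u + pairing l u.
  by have := psi_argmin u hk; rewrite !Hl; lra.
by have := argmin_prox_linear_growth Hn Hd argmin z; rewrite !Hl; lra.
Qed.

(* The induction step completes the square
   [||v k.+1 - v k||^2 / 2 - a k.+1 G k ||v k.+1 - v k|| >= - (a k.+1 G k)^2 / 2]. *)
Lemma psi_lower k : (k <= N)%N -> A k * f (x k) <= psi k (v k).
Proof.
elim: k => [|k IH] hk.
  rewrite run_A0 run_psi0 run_v0 /bregman.
  have -> : vsub x0 x0 = @vzero n by vec_ring.
  by rewrite pairing0r; lra.
have hk' := ltnW hk.
have [a0 [_ Hdec]] := step_size_bounds hk (A_ge0 hk').
have growth := psi_growth (v k.+1) hk'.
have Hy := pairing_grad_y_ge0 hk'.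
have Ak0 := A_ge0 hk'.
have fyx : A k * f (y k) <= A k * f (x k) by apply: Rmult_le_compat_l => //; exact: f_y_le_f_x.
have := Rabs_pairing_le_dual Hn (gf (y k)) (vsub (v k.+1) (v k)).
rewrite run_psi_succ // (run_A_succ hk) in Hdec *.
have -> : vsub (v k.+1) (y k) = vadd (vsub (v k.+1) (v k)) (vsub (v k) (y k)) by vec_ring.
rewrite pairingDr => HP.
have := Rle_abs (- pairing (gf (y k)) (vsub (v k.+1) (v k))); rewrite Rabs_Ropp.
have := IH hk'; have := dual_norm_ge0 Hn (gf (y k)); have := nrm_ge0 Hn (vsub (v k.+1) (v k)).
have := pow2_ge_0 (nrm (vsub (v k.+1) (v k)) - a k.+1 * G k).
nra.
Qed.

Lemma psi_upper k : (k <= N)%N -> psi k xs <= A k * f xs + V.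
Proof.
elim: k => [|k IH] hk; first by rewrite run_A0 run_psi0; lra.
have [a0 _] := step_size_bounds hk (A_ge0 (ltnW hk)).
case: Hq => _ [_ /(_ (y k)) Hqc].
have := IH (ltnW hk); rewrite run_psi_succ // (run_A_succ hk) !pairingBr.
rewrite !pairingBr in Hqc; nra.
Qed.

Lemma f_min z : f xs <= f z.
Proof. by case: Hq => _ []. Qed.

Lemma gap_rate k : (1 <= k <= N)%N -> f (x k) - f xs <= 4 * L * V / INR k ^ 2.
Proof.
move=> /andP [k1 hk].
have K2 : 0 < INR k ^ 2 by apply: pow_lt; apply: lt_0_INR; apply/ltP.
have := psi_lower hk; have := psi_upper hk; have := psi_argmin xs hk.
have := A_lower hk; have := f_min (x k); have := L_gt0.
move=> *; apply: (Rmult_le_reg_r (INR k ^ 2)) => //.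
rewrite /Rdiv Rmult_assoc Rinv_l; last lra.
nra.
Qed.

Lemma gap_ge_grad k : (k <= N)%N -> G k ^ 2 / (2 * L) <= f (x k) - f xs.
Proof.
move=> hk; have := grad_step_decrease Hn Hs HL (y k).
by have := f_min (grad_step nrm sharp gf L (y k)); have := f_y_le_f_x hk; lra.
Qed.

(* Each of the [N - k + 1] steps from [k] on decreases [f] by more than [M / (2L)]. *)
Lemma gap_gt_tail k M : (k <= N)%N -> (forall j, (k <= j <= N)%N -> M < G j ^ 2) ->
  INR (N - k).+1 * (M / (2 * L)) < f (x k) - f xs.
Proof.
have c0 : 0 < / (2 * L) by apply: Rinv_0_lt_compat; have := L_gt0; lra.
move Ej : (N - k)%N => j; elim: j k Ej => [|j IH] k Ej hk HM.
  have kN : k = N by lia.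
  subst k; have := gap_ge_grad (leqnn N); have := HM N; rewrite leqnn => /(_ isT).
  rewrite /Rdiv /=; nra.
have hkN : (k < N)%N by lia.
have HMk : M < G k ^ 2 by apply: HM; rewrite leqnn ltnW.
have HM' i : (k.+1 <= i <= N)%N -> M < G i ^ 2.
  by move=> /andP [? ?]; apply: HM; apply/andP; lia.
have := IH k.+1 ltac:(lia) hkN HM'.
have := grad_decrease hkN; have := f_y_le_f_x (ltnW hkN).
rewrite !S_INR /Rdiv; nra.
Qed.

End AGMsDR.

Theorem mainTheorem4 (n : nat) (nrm : vec n -> R) (sharp : vec n -> vec n)
  (d : vec n -> R) (gd : vec n -> vec n) (f : vec n -> R) (gf : vec n -> vec n)
  (L : R) (xs : vec n) (opt : agm_option) (x0 : vec n) (N : nat)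
  (x v y : nat -> vec n) (A a beta h : nat -> R) (psi : nat -> vec n -> R) :
  is_norm nrm ->
  is_sharp_map nrm sharp ->
  prox_function nrm d gd ->
  L_smooth nrm L f gf ->
  weakly_quasi_convex 1 f gf xs ->
  (1 <= N)%N ->
  AGMsDR_run nrm sharp d gd f gf L opt x0 N x v y A a beta h psi ->
  (exists k, (uphalf N <= k <= N)%N /\
     (dual_norm nrm (gf (y k))) ^ 2 <= 64 * L ^ 2 * bregman d gd xs x0 / (INR N) ^ 3) /\
  f (x N) - f xs <= 4 * L * bregman d gd xs x0 / (INR N) ^ 2.
Proof.
move=> Hn Hs Hd HL Hq N1 Hrun.
have L0 : 0 < L by case: HL.
have V0 := bregman_ge0 Hd xs x0.
have hm := uphalf_bounds N1; have /andP [_ mN] := hm.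
split; last by apply: (gap_rate Hn Hs Hd HL Hq Hrun); rewrite N1 leqnn.
apply: NNPP => no_small_grad.
pose M := 64 * L ^ 2 * bregman d gd xs x0 / INR N ^ 3.
have large j : (uphalf N <= j <= N)%N -> M < dual_norm nrm (gf (y j)) ^ 2.
  by move=> hj; apply: Rnot_le_lt => hle; apply: no_small_grad; exists j.
have := gap_gt_tail Hn Hs HL Hq Hrun mN large.
have := gap_rate Hn Hs Hd HL Hq Hrun hm.
have := uphalf_tail_bound N1 (Rmult_le_pos _ _ (Rlt_le _ _ L0) V0).
have N0 : 0 < INR N by apply: lt_0_INR; apply/ltP.
rewrite (_ : M / (2 * L) = 32 * (L * bregman d gd xs x0) / INR N ^ 3); last by rewrite /M; field; split; lra.
move=> *; lra.
Qed.
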